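(* Let $\mathcal U$ be a two-dimensional update family with stable set $\mathcal S$. There exists a finite set $\mathcal Q\subset S^1$ such that for every pair $u,v$ of consecutive elements of $\mathcal S\cup\mathcal Q$ there exists an update rule $X\in\mathcal U$ with $$X\subset\big(\mathbb H_u\cup\ell_u\big)\cap\big(\mathbb H_v\cup\ell_v\big).$$
   Context: An update family is a finite collection $\mathcal U$ of finite subsets of $\mathbb Z^2\setminus\{0\}$ (update rules), acting by $A_{t+1}=A_t\cup\{x:x+X\subset A_t\text{ for some }X\in\mathcal U\}$, closure $[A]=\bigcup_tA_t$. For $u\in S^1$, $\mathbb H_u=\{x\in\mathbb Z^2:\langle x,u\rangle<0\}$ and $\ell_u=\{x\in\mathbb Z^2:\langle x,u\rangle=0\}$; $u$ is stable if $[\mathbb H_u]=\mathbb H_u$. For $\mathcal T\subset S^1$, elements $u,v\in\mathcal T$ are consecutive if $u\ne v$ and $\mathcal T\cap[u,v]=\{u,v\}$, where $[u,v]$ is the closed arc of $S^1$ from $u$ to $v$ (in a fixed orientation). *)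

From Stdlib Require Import Reals ZArith List.
Open Scope R_scope.

Definition pt := (Z * Z)%type.
Definition zset := pt -> Prop.
Definition padd (x y : pt) : pt := ((fst x + fst y)%Z, (snd x + snd y)%Z).

Definition rule := list pt.
Definition update_family (U : list rule) : Prop :=
  forall X, In X U -> forall x, In x X -> x <> (0%Z, 0%Z).

Definition step (U : list rule) (A : zset) : zset :=
  fun x => A x \/ exists X, In X U /\ forall y, In y X -> A (padd x y).
Fixpoint iter_step (U : list rule) (A : zset) (t : nat) : zset :=
  match t with
  | O => A
  | S t' => step U (iter_step U A t')
  end.
Definition closure (U : list rule) (A : zset) : zset :=
  fun x => exists t, iter_step U A t x.

Definition vec := (R * R)%type.
Definition on_S1 (u : vec) : Prop := fst u ^ 2 + snd u ^ 2 = 1.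

Definition ip (x : pt) (u : vec) : R :=
  IZR (fst x) * fst u + IZR (snd x) * snd u.

Definition H (u : vec) : zset := fun x => ip x u < 0.
Definition ell (u : vec) : zset := fun x => ip x u = 0.

Definition stable (U : list rule) (u : vec) : Prop :=
  on_S1 u /\ forall x, closure U (H u) x <-> H u x.

Definition rot (t : R) (u : vec) : vec :=
  (cos t * fst u - sin t * snd u, sin t * fst u + cos t * snd u).

(* w lies in the closed arc [u,v] of S^1 going counterclockwise from u to v:
   v = rot T u with T in [0, 2*PI) (T is unique), and w = rot t u, 0<=t<=T. *)
Definition in_arc (u v w : vec) : Prop :=
  exists T t, 0 <= T < 2 * PI /\ v = rot T u /\ 0 <= t <= T /\ w = rot t u.

Definition consecutive (T : vec -> Prop) (u v : vec) : Prop :=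
  T u /\ T v /\ u <> v /\ (forall w, T w -> in_arc u v w -> w = u \/ w = v).

(** Take for [Q] the unit vectors orthogonal to some point of some rule.  If [u], [v]
    are consecutive in [S ∪ Q], the direction [w] halfway along the arc from [u] to
    [v] is unstable, so some rule [X] lies in the open half-plane [H_w].  For each
    [y ∈ X] the function [t ↦ <y, rot t u>] is negative at [w] and has no zero in the
    open arc, for a zero would put an element of [Q] strictly between [u] and [v];
    by the intermediate value theorem it is nonpositive at both ends. *)
From Stdlib Require Import Reals ZArith List Lra Psatz Classical.
Open Scope R_scope.

Lemma cos_neq_1 s : 0 < s < 2 * PI -> cos s <> 1.
Proof.
  intros Hs Hc.
  replace s with (2 * (s / 2)) in Hc by field.
  rewrite cos_2a_sin in Hc.
  assert (0 < sin (s / 2)) by (apply sin_gt_0; lra).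
  nra.
Qed.

Lemma rot0 u : rot 0 u = u.
Proof. unfold rot; rewrite cos_0, sin_0; destruct u; simpl; f_equal; ring. Qed.

Lemma rot_on_S1 t u : on_S1 u -> on_S1 (rot t u).
Proof.
  unfold on_S1, rot; destruct u as [a b]; simpl; intros Hu.
  pose proof (sin2_cos2 t). unfold Rsqr in *. nra.
Qed.

Lemma cos_sin_rot t u : on_S1 u ->
  cos t = fst u * fst (rot t u) + snd u * snd (rot t u) /\
  sin t = fst u * snd (rot t u) - snd u * fst (rot t u).
Proof.
  unfold on_S1, rot; destruct u as [a b]; simpl fst; simpl snd; intros Hu.
  split.
  - transitivity (cos t * (a ^ 2 + b ^ 2)); [rewrite Hu; ring | ring].
  - transitivity (sin t * (a ^ 2 + b ^ 2)); [rewrite Hu; ring | ring].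
Qed.

Lemma rot_angle_inj u s t : on_S1 u ->
  0 <= s < 2 * PI -> 0 <= t < 2 * PI -> rot s u = rot t u -> s = t.
Proof.
  intros Hu Hs Ht E.
  destruct (cos_sin_rot s u Hu) as [Cs Ss], (cos_sin_rot t u Hu) as [Ct St].
  rewrite E, <- Ct in Cs. rewrite E, <- St in Ss.
  assert (Hcos : forall a b, 0 <= a -> a < b < 2 * PI ->
            cos a = cos b -> sin a = sin b -> False).
  { intros a b Ha Hab Ca Sa. apply (cos_neq_1 (b - a)); [lra |].
    rewrite cos_minus, <- Ca, <- Sa. pose proof (sin2_cos2 a). unfold Rsqr in *. lra. }
  destruct (Rtotal_order s t) as [Hlt | [Heq | Hgt]]; auto; exfalso.
  - exact (Hcos s t ltac:(lra) ltac:(lra) Cs Ss).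
  - exact (Hcos t s ltac:(lra) ltac:(lra) (eq_sym Cs) (eq_sym Ss)).
Qed.

Lemma rot_angle_exists u v : on_S1 u -> on_S1 v ->
  exists T, 0 <= T < 2 * PI /\ v = rot T u.
Proof.
  destruct u as [u1 u2], v as [v1 v2]; unfold on_S1, rot; simpl; intros Hu Hv.
  set (c := u1 * v1 + u2 * v2). set (s := u1 * v2 - u2 * v1).
  assert (Hcs : c * c + s * s = 1) by (unfold c, s; nra).
  assert (Hc : -1 <= c <= 1) by nra.
  assert (Hsqrt : sqrt (1 - c²) = Rabs s).
  { rewrite <- sqrt_Rsqr_abs. f_equal. unfold Rsqr; lra. }
  assert (Hrot : forall T, cos T = c -> sin T = s ->
            (v1, v2) = (cos T * u1 - sin T * u2, sin T * u1 + cos T * u2)).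
  { intros T -> ->. unfold c, s. f_equal.
    - transitivity (v1 * (u1 * (u1 * 1) + u2 * (u2 * 1))); [rewrite Hu; ring | ring].
    - transitivity (v2 * (u1 * (u1 * 1) + u2 * (u2 * 1))); [rewrite Hu; ring | ring]. }
  destruct (Rle_lt_dec 0 s) as [Hs | Hs].
  - exists (acos c). pose proof (acos_bound c). pose proof PI_RGT_0. split; [lra |].
    apply Hrot; [now apply cos_acos |].
    rewrite sin_acos, Hsqrt by auto. now apply Rabs_pos_eq.
  - assert (Hc' : -1 < c < 1) by nra.
    pose proof (acos_bound_lt c Hc').
    exists (2 * PI - acos c). split; [lra |].
    apply Hrot.
    + rewrite cos_minus, cos_2PI, sin_2PI, cos_acos by lra. ring.
    + rewrite sin_minus, cos_2PI, sin_2PI, sin_acos by lra.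
      rewrite Hsqrt, Rabs_left by lra. ring.
Qed.

Lemma consecutive_open_arc (P : vec -> Prop) u v T : on_S1 u ->
  consecutive P u v -> 0 <= T < 2 * PI -> v = rot T u ->
  forall t, 0 < t < T -> ~ P (rot t u).
Proof.
  intros Hu [_ [_ [_ Hcons]]] HT Hv t Ht Hw.
  destruct (Hcons _ Hw) as [E | E].
  - exists T, t. repeat split; auto; lra.
  - rewrite <- (rot0 u) in E at 2.
    apply (rot_angle_inj u t 0) in E; auto; lra.
  - rewrite Hv in E. apply (rot_angle_inj u t T) in E; auto; lra.
Qed.

Lemma ip_padd x y w : ip (padd x y) w = ip x w + ip y w.
Proof. unfold ip, padd; destruct x, y; simpl; rewrite !plus_IZR; ring. Qed.

Lemma continuity_ip_rot (y : pt) (u : vec) : continuity (fun t => ip y (rot t u)).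
Proof. unfold ip, rot; destruct y, u; simpl; intros x; reg. Qed.

Lemma stable_of_nonneg_points U w : on_S1 w ->
  (forall X, In X U -> exists y, In y X /\ 0 <= ip y w) -> stable U w.
Proof.
  intros Hw HU; split; auto. intros x; split.
  - intros [t Ht]. revert x Ht. induction t as [| t IHt]; simpl; intros x Ht; auto.
    destruct Ht as [Ht | [X [HX Hall]]]; auto.
    destruct (HU X HX) as [y [Hy Hy0]].
    specialize (IHt _ (Hall y Hy)). unfold H in *. rewrite ip_padd in IHt. lra.
  - intros Hx. now exists O.
Qed.

Lemma unstable_rule U w : on_S1 w -> ~ stable U w ->
  exists X, In X U /\ forall y, In y X -> ip y w < 0.
Proof.
  intros Hw Hns. apply NNPP; intros Hno. apply Hns, stable_of_nonneg_points; auto.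
  intros X HX. apply NNPP; intros Hne. apply Hno. exists X; split; auto.
  intros y Hy. apply Rnot_le_lt. intros Hle. apply Hne. eauto.
Qed.

Definition unit_normals (y : pt) : list vec :=
  let a := IZR (fst y) in let b := IZR (snd y) in let n := sqrt (a * a + b * b) in
  (- b / n, a / n) :: (b / n, - a / n) :: nil.

Definition rule_normals (U : list rule) : list vec :=
  flat_map (fun X => flat_map unit_normals X) U.

Lemma norm2_pos (y : pt) : y <> (0%Z, 0%Z) ->
  0 < IZR (fst y) * IZR (fst y) + IZR (snd y) * IZR (snd y).
Proof.
  destruct y as [p q]; simpl; intros Hy.
  destruct (Req_dec (IZR p) 0) as [Hp | Hp]; [| nra].
  destruct (Req_dec (IZR q) 0) as [Hq | Hq]; [| nra].
  apply eq_IZR_R0 in Hp; apply eq_IZR_R0 in Hq; subst; congruence.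
Qed.

Lemma unit_normals_on_S1 y w : y <> (0%Z, 0%Z) -> In w (unit_normals y) -> on_S1 w.
Proof.
  intros Hy Hw. pose proof (norm2_pos y Hy) as Hn.
  unfold unit_normals, on_S1 in *.
  set (a := IZR (fst y)) in *. set (b := IZR (snd y)) in *.
  pose proof (sqrt_lt_R0 _ Hn) as Hs. pose proof (sqrt_sqrt _ (Rlt_le _ _ Hn)) as Hss.
  set (n := sqrt (a * a + b * b)) in *.
  assert (Hunit : forall p q, p * p + q * q = a * a + b * b ->
            (p / n) ^ 2 + (q / n) ^ 2 = 1).
  { intros p q Hpq. replace ((p / n) ^ 2 + (q / n) ^ 2) with ((p * p + q * q) / (n * n))
      by (field; lra). rewrite Hpq, Hss. field; lra. }
  destruct Hw as [<- | [<- | []]]; simpl fst; simpl snd; apply Hunit; ring.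
Qed.

Lemma unit_normals_complete y w : y <> (0%Z, 0%Z) -> on_S1 w -> ip y w = 0 ->
  In w (unit_normals y).
Proof.
  intros Hy Hw Hip. pose proof (norm2_pos y Hy) as Hn.
  unfold unit_normals. destruct w as [c d]. unfold ip, on_S1 in *; simpl in *.
  set (a := IZR (fst y)) in *. set (b := IZR (snd y)) in *.
  pose proof (sqrt_lt_R0 _ Hn) as Hs. pose proof (sqrt_sqrt _ (Rlt_le _ _ Hn)) as Hss.
  set (n := sqrt (a * a + b * b)) in *.
  (* [w] is the multiple [k * (-b, a)] of a normal vector, with [k * n = ±1] *)
  set (k := (a * d - b * c) / (a * a + b * b)).
  assert (Hc : c = - b * k).
  { unfold k. apply (Rmult_eq_reg_r (a * a + b * b)); [| lra].
    field_simplify; [| lra].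
    transitivity (- b * (a * d - b * c) + a * (a * c + b * d)); [ring |].
    rewrite Hip. ring. }
  assert (Hd : d = a * k).
  { unfold k. apply (Rmult_eq_reg_r (a * a + b * b)); [| lra].
    field_simplify; [| lra].
    transitivity (a * (a * d - b * c) + b * (a * c + b * d)); [ring |].
    rewrite Hip. ring. }
  clearbody k n.
  assert (Hk : (k * n) * (k * n) = 1).
  { replace ((k * n) * (k * n)) with (k * k * (n * n)) by ring.
    rewrite Hss, <- Hw, Hc, Hd. ring. }
  replace k with ((k * n) / n) in Hc, Hd by (field; lra).
  rewrite Hc, Hd.
  assert (Hkn : k * n = 1 \/ k * n = -1) by nra.
  destruct Hkn as [-> | ->]; [left | right; left]; f_equal; field; lra.
Qed.

Lemma rule_normals_on_S1 U : update_family U ->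
  forall w, In w (rule_normals U) -> on_S1 w.
Proof.
  intros hU w Hw. apply in_flat_map in Hw as [X [HX Hw]].
  apply in_flat_map in Hw as [y [Hy Hw]].
  exact (unit_normals_on_S1 y w (hU X HX y Hy) Hw).
Qed.

Lemma rule_normals_complete U X y w : update_family U -> In X U -> In y X ->
  on_S1 w -> ip y w = 0 -> In w (rule_normals U).
Proof.
  intros hU HX Hy Hw Hip. apply in_flat_map. exists X; split; auto.
  apply in_flat_map. exists y; split; auto.
  exact (unit_normals_complete y w (hU X HX y Hy) Hw Hip).
Qed.

Lemma nonpos_ends_of_no_root (f : R -> R) a b c : continuity f -> a < c < b ->
  f c < 0 -> (forall z, a < z < b -> f z <> 0) -> f a <= 0 /\ f b <= 0.
Proof.
  intros Hf Hc Hfc Hz. split; apply Rnot_lt_le; intros Hpos.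
  - destruct (IVT (fun t => - f t) a c) as [z [Hz1 Hz2]]; try lra.
    + intros x. now apply continuity_opp.
    + assert (z <> a) by (intros ->; lra).
      assert (z <> c) by (intros ->; lra).
      apply (Hz z); lra.
  - destruct (IVT f c b) as [z [Hz1 Hz2]]; try lra; auto.
    assert (z <> b) by (intros ->; lra).
    assert (z <> c) by (intros ->; lra).
    apply (Hz z); lra.
Qed.

Theorem mainTheorem7 (U : list rule) (hU : update_family U) :
  exists Q : list vec,
    (forall q, In q Q -> on_S1 q) /\
    forall u v,
      consecutive (fun w => stable U w \/ In w Q) u v ->
      exists X, In X U /\
        forall x, In x X -> (H u x \/ ell u x) /\ (H v x \/ ell v x).
Proof.
  exists (rule_normals U). split; [exact (rule_normals_on_S1 U hU) |].
  intros u v Hcons.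
  assert (Hu : on_S1 u) by (destruct Hcons as [[[? _] | ?] _]; eauto using rule_normals_on_S1).
  assert (Hv : on_S1 v) by (destruct Hcons as [_ [[[? _] | ?] _]]; eauto using rule_normals_on_S1).
  destruct (rot_angle_exists u v Hu Hv) as [T [HT Hvrot]].
  assert (HT0 : 0 < T).
  { destruct Hcons as [_ [_ [Huv _]]].
    destruct (Req_dec T 0) as [-> | ?]; [rewrite rot0 in Hvrot; congruence | lra]. }
  pose proof (consecutive_open_arc _ u v T Hu Hcons HT Hvrot) as Harc.
  destruct (unstable_rule U (rot (T / 2) u)) as [X [HX Hneg]].
  { now apply rot_on_S1. }
  { intros Hs. apply (Harc (T / 2)); [lra | now left]. }
  exists X; split; auto. intros y Hy.
  destruct (nonpos_ends_of_no_root (fun t => ip y (rot t u)) 0 T (T / 2))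
    as [H0 HT']; auto using continuity_ip_rot; [lra | |].
  - intros z Hz E. apply (Harc z Hz). right.
    apply (rule_normals_complete U X y); auto using rot_on_S1.
  - simpl in H0, HT'. rewrite rot0 in H0. rewrite <- Hvrot in HT'.
    unfold H, ell. split; [destruct H0 | destruct HT']; auto.
Qed.
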